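(* Let $R$ be an associative ring with identity, and let $a,b,c,d\in R$ satisfy $bdb=bac$ and $dbd=acd$. If $ac\in R^{\dagger}$, then $bd\in R^{\dagger}$, $(bd)^{\dagger}=b\big((ac)^{\dagger}\big)^2d$, and $i(bd)\le i(ac)+1$.
   Context: For $x\in R$, $\mathrm{comm}(x)=\{y\in R : xy=yx\}$ and $\mathrm{comm}^2(x)=\{y\in R : yz=zy \text{ for all } z\in\mathrm{comm}(x)\}$. $R^{rad}$ is the Jacobson radical of $R$. An element $x$ has a p-Drazin (pseudo Drazin) inverse if there is $y\in R$ with $y=yxy$, $y\in\mathrm{comm}^2(x)$ and $x^k-x^{k+1}y\in R^{rad}$ for some $k\in\mathbb{N}$; such $y$ is unique and denoted $x^{\dagger}$; $R^{\dagger}$ is the set of such $x$. The smallest such $k$ is the p-Drazin index $i(x)$. *)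

From HB Require Import structures.
From mathcomp Require Import all_boot all_order all_algebra.
Set Implicit Arguments. Unset Strict Implicit. Unset Printing Implicit Defensive.
Import GRing.Theory.
Local Open Scope ring_scope.

Definition left_ideal (R : pzRingType) (I : R -> Prop) : Prop :=
  [/\ I 0,
      (forall x y, I x -> I y -> I (x + y)),
      (forall x, I x -> I (- x)) &
      (forall r x, I x -> I (r * x))].

Definition maximal_left_ideal (R : pzRingType) (I : R -> Prop) : Prop :=
  [/\ left_ideal I, ~ I 1 &
      forall J : R -> Prop, left_ideal J -> (forall x, I x -> J x) ->
        ~ J 1 -> forall x, J x -> I x].

Definition jacobson (R : pzRingType) (x : R) : Prop :=
  forall I : R -> Prop, maximal_left_ideal I -> I x.

Definition comm_set (R : pzRingType) (x : R) : R -> Prop :=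
  fun y => x * y = y * x.
Definition comm2_set (R : pzRingType) (x : R) : R -> Prop :=
  fun y => forall z, comm_set x z -> y * z = z * y.

Definition pdrazin_inv (R : pzRingType) (x y : R) : Prop :=
  [/\ y = y * x * y, comm2_set x y &
      exists k : nat, (0 < k)%N /\ jacobson (x ^+ k - x ^+ k.+1 * y)].

Definition pdrazin (R : pzRingType) (x : R) : Prop := exists y, pdrazin_inv x y.

Definition pdrazin_index (R : pzRingType) (x : R) (n : nat) : Prop :=
  exists y, [/\ pdrazin_inv x y, (0 < n)%N, jacobson (x ^+ n - x ^+ n.+1 * y) &
    forall k : nat, (0 < k)%N -> jacobson (x ^+ k - x ^+ k.+1 * y) -> (n <= k)%N].

From HB Require Import structures.
From mathcomp Require Import all_boot all_order all_algebra.
From Stdlib Require Import Classical.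
Set Implicit Arguments. Unset Strict Implicit.
Import GRing.Theory.
Local Open Scope ring_scope.

(* Write x = ac, so the hypotheses read  bdb = bx  and  dbd = xd.
   1. The Jacobson radical, defined as the intersection of the maximal left
      ideals, is a two-sided ideal.  Left absorption is immediate; for right
      absorption we show that the colon  {s | s r in I}  of a maximal left
      ideal I with r not in I is again a maximal left ideal.
   2. From bdb = bx and dbd = xd: (bd)^n b = b x^n, (bd)^(n+1) = b x^n d,
      x commutes with db, and x commutes with dwb whenever w commutes with bd.
      Hence a p-Drazin inverse y of x commutes with these elements.
   3. For z = b y^2 d this yields  z (bd) z = z,  z in comm^2(bd),  and
      (bd)^(k+1) - (bd)^(k+2) z = b (x^k - x^(k+1) y) d,  which lies in the
      radical when x^k - x^(k+1) y does.  So z is the p-Drazin inverse of bd,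
      with admissible exponent k+1 for every admissible exponent k of x.
   4. The index bound follows by taking the least admissible exponent for bd. *)

Lemma maximal_left_ideal_add_one (R : pzRingType) (I : R -> Prop) (q : R) :
  maximal_left_ideal I -> ~ I q -> exists i u, I i /\ 1 = i + u * q.
Proof.
move=> [[I0 ID IN IM] I1 Imax] Iq; apply: NNPP => no_one.
pose J := fun s : R => exists i u, I i /\ s = i + u * q.
have J_ideal : left_ideal J.
  split.
  - by exists 0, 0; rewrite mul0r addr0.
  - move=> _ _ [i [u [Ii ->]]] [i' [u' [Ii' ->]]].
    by exists (i + i'), (u + u'); rewrite mulrDl addrACA; split => //; apply: ID.
  - move=> _ [i [u [Ii ->]]].
    by exists (- i), (- u); rewrite opprD mulNr; split => //; apply: IN.
  - move=> r _ [i [u [Ii ->]]].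
    by exists (r * i), (r * u); rewrite mulrDr mulrA; split => //; apply: IM.
have IJ : forall s, I s -> J s by move=> s Is; exists s, 0; rewrite mul0r addr0.
have J1 : ~ J 1 by move=> [i [u [Ii E]]]; apply: no_one; exists i, u.
by apply: Iq; apply: (Imax J J_ideal IJ J1); exists 0, 1; rewrite mul1r add0r.
Qed.

Lemma maximal_left_ideal_colon (R : pzRingType) (I : R -> Prop) (r : R) :
  maximal_left_ideal I -> ~ I r -> maximal_left_ideal (fun s => I (s * r)).
Proof.
move=> I_max Ir; have [[I0 ID IN IM] I1 _] := I_max.
split.
- split.
  + by rewrite mul0r.
  + by move=> s t Is It; rewrite mulrDl; apply: ID.
  + by move=> s Is; rewrite mulNr; apply: IN.
  + by move=> t s Is; rewrite -mulrA; apply: IM.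
- by rewrite mul1r.
move=> J [_ JD _ JM] IJ J1 s Js; apply: NNPP => Isr.
have [i [u [Ii one]]] := maximal_left_ideal_add_one I_max Isr.
(* 1 = (1 - rus) + (ru)s, where (1 - rus) r = ri lies in I *)
have I_rest : I ((1 - r * u * s) * r).
  have Er : r = r * i + r * u * s * r by rewrite -{1}(mulr1 r) one mulrDr !mulrA.
  by rewrite mulrBl mul1r {1}Er addrK; apply: IM.
apply: J1; rewrite -(subrK (r * u * s) 1).
by apply: JD; [exact: IJ | exact: JM].
Qed.

Lemma jacobson_mull (R : pzRingType) (r x : R) : jacobson x -> jacobson (r * x).
Proof. by move=> Jx I I_max; have [[_ _ _ IM] _ _] := I_max; apply: IM; exact: Jx. Qed.

Lemma jacobson_mulr (R : pzRingType) (x r : R) : jacobson x -> jacobson (x * r).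
Proof.
move=> Jx I I_max; have [[_ _ _ IM] _ _] := I_max.
have [Ir | Ir] := classic (I r); first exact: IM.
exact: (Jx _ (maximal_left_ideal_colon I_max Ir)).
Qed.

Lemma exists_least (P : nat -> Prop) (n : nat) :
  P n -> exists m, P m /\ forall k, P k -> (m <= k)%N.
Proof.
elim/ltn_ind: n => n IH Pn.
have [[k [lt_kn Pk]] | no_smaller] := classic (exists k, (k < n)%N /\ P k).
  exact: IH lt_kn Pk.
exists n; split=> // k Pk; rewrite leqNgt; apply/negP => lt_kn.
by apply: no_smaller; exists k.
Qed.

Section Cline.
Variables (R : pzRingType) (b d x : R).
Hypotheses (hb : b * d * b = b * x) (hd : d * b * d = x * d).

(* The hypotheses bdb = bx and dbd = xd, in the form needed for rewriting
   inside left-associated products. *)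
Lemma mulr_bdb (P : R) : P * b * d * b = P * b * x.
Proof. by rewrite -!mulrA (mulrA b) hb mulrA. Qed.
Lemma mulr_dbd (P : R) : P * d * b * d = P * x * d.
Proof. by rewrite -!mulrA (mulrA d) hd mulrA. Qed.

Lemma bd_pow_mulr (n : nat) : (b * d) ^+ n * b = b * x ^+ n.
Proof.
elim: n => [|n IH]; first by rewrite mul1r mulr1.
by rewrite exprS -mulrA IH !mulrA hb -mulrA -exprS.
Qed.

Lemma bd_powS (n : nat) : (b * d) ^+ n.+1 = b * x ^+ n * d.
Proof. by rewrite exprSr mulrA bd_pow_mulr. Qed.

(* x d b = d b d b = d b x *)
Lemma comm_db : comm_set x (d * b).
Proof. by rewrite /comm_set mulrA -hd -!mulrA (mulrA b d b) hb !mulrA. Qed.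

(* x d w b = d b d w b = d w b d b = d w b x  when w commutes with bd *)
Lemma comm_dwb (w : R) : comm_set (b * d) w -> comm_set x (d * w * b).
Proof.
rewrite /comm_set => bdw.
rewrite !mulrA -hd -!mulrA [b * (d * _)]mulrA [b * d * _]mulrA bdw.
by rewrite -!mulrA (mulrA b d b) hb !mulrA.
Qed.

Section Inverse.
Variable y : R.
Hypotheses (yxy : y = y * x * y) (y_comm2 : comm2_set x y).

(* y commutes with x and with db; together with yxy = y this gives the
   absorption rules y^2 x = y and x y^2 = y, again after any left factor. *)
Lemma y_comm_x : y * x = x * y.
Proof. exact: (y_comm2 (erefl (x * x))). Qed.
Lemma mulr_ydb (P : R) : P * y * d * b = P * d * b * y.
Proof. by rewrite -!mulrA (y_comm2 comm_db) !mulrA. Qed.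
Lemma mulr_yyx (P : R) : P * y * y * x = P * y.
Proof. by rewrite -!mulrA y_comm_x [y * (x * y)]mulrA -yxy. Qed.
Lemma mulr_xyy (P : R) : P * x * y * y = P * y.
Proof. by rewrite -!mulrA (mulrA x) -y_comm_x -yxy. Qed.

(* z = b y^2 d is an inner inverse of bd:
   b y^2 (dbd) b y^2 d = b y^2 x (db) y^2 d = b y^2 x y^2 (dbd) = b y^2 d. *)
Lemma cline_inner :
  b * y ^+ 2 * d = b * y ^+ 2 * d * (b * d) * (b * y ^+ 2 * d).
Proof. by rewrite expr2 !mulrA mulr_dbd mulr_yyx mulr_ydb hb mulr_xyy. Qed.

Lemma cline_comm2 : comm2_set (b * d) (b * y ^+ 2 * d).
Proof.
move=> w bdw; have ydwb := y_comm2 (comm_dwb bdw).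
have mulr_ydwb (P : R) : P * y * d * w * b = P * d * w * b * y.
  by rewrite -!mulrA (mulrA d w b) ydwb !mulrA.
(* b y^2 d w = b y^3 (dbd) w = b y^3 (dwb) d = (bdw) b y^3 d = w b x y^3 d *)
have expand : b * y * y * d * w = b * y * y * y * (d * b * d) * w.
  by rewrite hd !mulrA mulr_yyx.
have swap : d * b * d * w = d * w * b * d by rewrite -!mulrA (mulrA b) bdw !mulrA.
rewrite expr2 !mulrA expand -(mulrA _ (d * b * d)) swap !mulrA !mulr_ydwb.
by rewrite bdw !mulrA mulr_bdb mulr_xyy.
Qed.

Lemma cline_residual (k : nat) :
  (b * d) ^+ k.+1 - (b * d) ^+ k.+2 * (b * y ^+ 2 * d)
  = b * (x ^+ k - x ^+ k.+1 * y) * d.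
Proof.
rewrite bd_powS !mulrA bd_pow_mulr (exprSr x k.+1) mulrBr mulrBl.
by rewrite !mulrA mulr_xyy.
Qed.

Lemma cline_jacobson (k : nat) :
  jacobson (x ^+ k - x ^+ k.+1 * y) ->
  jacobson ((b * d) ^+ k.+1 - (b * d) ^+ k.+2 * (b * y ^+ 2 * d)).
Proof.
by rewrite cline_residual => J; apply: jacobson_mulr; apply: jacobson_mull.
Qed.

Lemma cline_pdrazin_inv :
  (exists k, (0 < k)%N /\ jacobson (x ^+ k - x ^+ k.+1 * y)) ->
  pdrazin_inv (b * d) (b * y ^+ 2 * d).
Proof.
move=> [k [_ Jk]]; split; [exact: cline_inner | exact: cline_comm2 |].
by exists k.+1; split => //; apply: cline_jacobson.
Qed.

End Inverse.
End Cline.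

Theorem theorem3p2 (R : pzRingType) (a b c d : R)
  (h1 : b * d * b = b * a * c) (h2 : d * b * d = a * c * d)
  (hac : pdrazin (a * c)) :
  [/\ pdrazin (b * d),
      (forall y : R, pdrazin_inv (a * c) y -> pdrazin_inv (b * d) (b * y ^+ 2 * d)) &
      (forall n : nat, pdrazin_index (a * c) n ->
         exists m : nat, pdrazin_index (b * d) m /\ (m <= n.+1)%N)].
Proof.
have hb : b * d * b = b * (a * c) by rewrite h1 mulrA.
have inverse y : pdrazin_inv (a * c) y -> pdrazin_inv (b * d) (b * y ^+ 2 * d).
  by move=> [yxy yC adm]; exact: (cline_pdrazin_inv hb h2 yxy yC adm).
split => //; first by have [y hy] := hac; exists (b * y ^+ 2 * d); apply: inverse.
move=> n [y [hy _ Jn _]]; have [yxy yC _] := hy.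
pose z := b * y ^+ 2 * d.
pose admissible k := (0 < k)%N /\ jacobson ((b * d) ^+ k - (b * d) ^+ k.+1 * z).
have adm_nS : admissible n.+1 by split => //; exact: (cline_jacobson hb yxy yC Jn).
have [m [[m_gt0 Jm] m_least]] := exists_least adm_nS.
exists m; split; last exact: m_least.
exists z; split => //; first exact: inverse.
by move=> k k_gt0 Jk; apply: m_least.
Qed.
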